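(* Let $(G,X,\alpha)$ be a $G$-space with transitive action $\alpha$. Then there exist a $G$-space $(H,X,\gamma)$ with transitive action $\gamma$ such that $$\chi(H)\le\chi(X)\cdot\mathrm{inv}(G),\quad \mathrm{ib}(H)\le\mathrm{ib}(G),\quad w(H)\le\chi(X)\cdot\mathrm{ib}(G),$$ and an equivariant pair of maps $(\varphi,\mathrm{id}):(G,X,\alpha)\to(H,X,\gamma)$ with $\varphi$ an epimorphism.
   Context: All spaces are Tychonoff and all maps continuous. A $G$-space $(G,X,\alpha)$ is a topological group with a continuous action on $X$; transitive means $Gx=X$. An equivariant pair $(\varphi,\mathrm{id})$ is a continuous homomorphism $\varphi:G\to H$ with $\alpha(g,x)=\gamma(\varphi(g),x)$. The index of narrowness $\mathrm{ib}(G)$ is the least infinite cardinal $\tau$ such that for every neighborhood $U$ of the unit there is $A\subset G$ with $|A|\le\tau$ and $AU=G$. The invariance number $\mathrm{inv}(G)$ is the least infinite cardinal $\tau$ such that for every neighborhood $U$ of the unit there is a family $\gamma$ of at most $\tau$ neighborhoods of the unit such that for each $x\in G$ some $V\in\gamma$ satisfies $xVx^{-1}\subset U$. *)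

From HB Require Import structures.
From mathcomp Require Import all_boot all_order all_algebra.
From mathcomp Require Import all_classical all_reals all_analysis.
From mathcomp Require Import Rstruct Rstruct_topology.
Set Implicit Arguments. Unset Strict Implicit. Unset Printing Implicit Defensive.
Import Order.TTheory GRing.Theory Num.Theory.
Local Open Scope classical_set_scope.

Definition tychonoff (T : topologicalType) : Prop :=
  accessible_space T /\
  forall (x : T) (B : set T), closed B -> ~ B x ->
    exists f : T -> Rdefinitions.R,
      continuous f /\ f x = 0%R /\ (forall y, B y -> f y = 1%R).

Record topGroup := TopGroup {
  tg_sort :> topologicalType;
  tg_mul : tg_sort -> tg_sort -> tg_sort;
  tg_one : tg_sort;
  tg_inv : tg_sort -> tg_sort;
  tg_mulA : associative tg_mul;
  tg_mul1g : left_id tg_one tg_mul;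
  tg_mulVg : left_inverse tg_one tg_inv tg_mul;
  tg_mul_cont : continuous (fun p : tg_sort * tg_sort => tg_mul p.1 p.2);
  tg_inv_cont : continuous tg_inv }.

Definition is_Gspace (G : topGroup) (X : topologicalType) (alpha : G -> X -> X)
  : Prop :=
  [/\ tychonoff G, tychonoff X,
      continuous (fun p : G * X => alpha p.1 p.2),
      (forall x, alpha (tg_one G) x = x) &
      (forall g h x, alpha (tg_mul g h) x = alpha g (alpha h x))].

Definition transitive_action (G : topGroup) (X : Type) (alpha : G -> X -> X) :=
  forall x y : X, exists g : G, alpha g x = y.

Definition cont_hom (G H : topGroup) (phi : G -> H) : Prop :=
  continuous phi /\ forall g h, phi (tg_mul g h) = tg_mul (phi g) (phi h).

(** Cardinal invariants, expressed as "invariant <= |T|" for an index type T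
    (families of size <= |T| are the families indexed by T).  The invariants
    are by definition infinite cardinals, so "inv <= |T|" means: T infinite
    and the defining property holds with families indexed by T. *)
Definition infinite_type (T : Type) : Prop := exists f : nat -> T, injective f.

Definition char_le (X : topologicalType) (T : Type) : Prop :=
  infinite_type T /\
  forall x : X, exists B : T -> set X,
    (forall t, open (B t) /\ B t x) /\
    (forall U, nbhs x U -> exists t, B t `<=` U).

Definition weight_le (X : topologicalType) (T : Type) : Prop :=
  infinite_type T /\
  exists B : T -> set X,
    (forall t, open (B t)) /\
    (forall U x, open U -> U x -> exists t, B t x /\ B t `<=` U).

Definition ib_le (G : topGroup) (T : Type) : Prop :=
  infinite_type T /\
  forall U : set G, nbhs (tg_one G) U ->
    exists a : T -> G, forall g : G, exists t u, U u /\ g = tg_mul (a t) u.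

Definition inv_le (G : topGroup) (T : Type) : Prop :=
  infinite_type T /\
  forall U : set G, nbhs (tg_one G) U ->
    exists V : T -> set G,
      (forall t, nbhs (tg_one G) (V t)) /\
      (forall x : G, exists t, forall v, V t v ->
          U (tg_mul (tg_mul x v) (tg_inv x))).

From Pilot Require Import Defs.
From HB Require Import structures.
From mathcomp Require Import all_boot all_order all_algebra.
From mathcomp Require Import all_classical all_reals all_analysis.
From mathcomp Require Import Rstruct Rstruct_topology.

(* Let [H] be the image of [G] in the transformations of [X], so that the
   action factors through the quotient map [phi : G -> H].  [H] receives the
   group topology whose neighbourhoods of [phi g] are the sets [phi (g U)], [U]
   ranging over a filter [F] of neighbourhoods of the unit of [G].  [F] is
   generated by [chi(X)] neighbourhoods of the unit, pulled back from a local
   base of [X] at a point, by closing under symmetric square roots, under the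
   [inv(G)]-indexed conjugation-invariant refinements, and under finite meets.
   Its generators are finite terms, so [chi(H) <= chi(X) * inv(G)] by
   Hessenberg's [kappa * kappa = kappa].  By transitivity, conjugates of the
   generators control neighbourhoods of every point, which makes the action of
   [H] continuous.  [H] is T1 because [X] is and [H] acts faithfully, hence
   Tychonoff as a uniform space; [ib] does not grow under the continuous
   epimorphism [phi]; and [w <= chi * ib] in every topological group.  Since
   [inv(G) <= ib(G)] (Guran), [inv(G)] may be replaced by
   [min(inv(G), ib(G))], which yields [w(H) <= chi(X) * ib(G)]. *)

Set Implicit Arguments. Unset Strict Implicit. Unset Printing Implicit Defensive.
Local Open Scope classical_set_scope.

Declare Scope tg_scope.
Notation "x * y" := (tg_mul x y) : tg_scope.
Notation "x ^-1" := (tg_inv x) : tg_scope.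
Notation "1" := (tg_one _) : tg_scope.
Local Open Scope tg_scope.

(** * Cardinal invariants and topological groups *)

Lemma char_le_inj (X : topologicalType) (I J : Type) (f : I -> J) :
  injective f -> char_le X I -> char_le X J.
Proof.
move=> f_inj [[n n_inj] chX]; split; first by exists (f \o n) => i j /f_inj /n_inj.
move=> x; have [B [B_open B_base]] := chX x.
pose g := 'pinv_(fun=> n 0) setT f.
have gK i : g (f i) = i by apply: (pinvKV _ (in2W f_inj)); exact: mem_set.
exists (B \o g); split=> [j|U /B_base [i Bi]]; first exact: B_open.
by exists (f i); rewrite /= gK.
Qed.

Lemma weight_le_inj (X : topologicalType) (I J : Type) (f : I -> J) :
  injective f -> weight_le X I -> weight_le X J.
Proof.
move=> f_inj [[n n_inj] [B [B_open B_base]]].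
split; first by exists (f \o n) => i j /f_inj /n_inj.
pose g := 'pinv_(fun=> n 0) setT f.
have gK i : g (f i) = i by apply: (pinvKV _ (in2W f_inj)); exact: mem_set.
exists (B \o g); split=> [j|U x U_open Ux]; first exact: B_open.
by have [i Bi] := B_base U x U_open Ux; exists (f i); rewrite /= gK.
Qed.

Section TopGroupTheory.
Variable G : topGroup.
Implicit Types (x y z : G) (U : set G).

Lemma tg_mulKg x y : x^-1 * (x * y) = y.
Proof. by rewrite tg_mulA tg_mulVg tg_mul1g. Qed.

Lemma tg_mulgV x : x * x^-1 = 1.
Proof.
have -> : x * x^-1 = x^-1^-1 * x^-1 * (x * x^-1) by rewrite tg_mulVg tg_mul1g.
by rewrite -tg_mulA (tg_mulKg x) tg_mulVg.
Qed.

Lemma tg_mulg1 x : x * 1 = x.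
Proof. by rewrite -(tg_mulVg x) tg_mulA tg_mulgV tg_mul1g. Qed.

Lemma tg_mulKVg x y : x * (x^-1 * y) = y.
Proof. by rewrite tg_mulA tg_mulgV tg_mul1g. Qed.

Lemma tg_mulgK x y : y * x * x^-1 = y.
Proof. by rewrite -tg_mulA tg_mulgV tg_mulg1. Qed.

Lemma tg_invgK x : x^-1^-1 = x.
Proof. by rewrite -[RHS](tg_mulKg x^-1) tg_mulVg tg_mulg1. Qed.

Lemma tg_invg1 : (1 : G)^-1 = 1.
Proof. by rewrite -[LHS]tg_mul1g tg_mulgV. Qed.

Lemma tg_invMg x y : (x * y)^-1 = y^-1 * x^-1.
Proof.
rewrite -[RHS]tg_mulg1 -(tg_mulgV (x * y)) tg_mulA.
by rewrite -(tg_mulA y^-1) tg_mulKg tg_mulVg tg_mul1g.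
Qed.

Lemma tg_nbhs_mul x y (S : set G) : nbhs (x * y) S ->
  exists P Q, [/\ nbhs x P, nbhs y Q & forall u v, P u -> Q v -> S (u * v)].
Proof.
move=> /(@tg_mul_cont G (x, y)) [[P Q] /= [Px Qy] PQS].
by exists P, Q; split=> // u v Pu Qv; exact: (PQS (u, v)).
Qed.

Lemma tg_lmul_cont x : continuous (fun y => x * y).
Proof.
move=> y S /tg_nbhs_mul [P [Q [Px Qy PQS]]].
by apply: filterS Qy => v; exact: PQS (nbhs_singleton Px).
Qed.

Lemma tg_rmul_cont x : continuous (fun y => y * x).
Proof.
move=> y S /tg_nbhs_mul [P [Q [Py Qx PQS]]].
by apply: filterS Py => u Pu; exact: PQS Pu (nbhs_singleton Qx).
Qed.

Lemma tg_nbhs1_sqrt U : nbhs 1 U -> exists V, [/\ nbhs 1 V,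
  forall v, V v -> V v^-1 & forall u v, V u -> V v -> U (u * v)].
Proof.
move=> U1; have : nbhs (1 * 1) U by rewrite tg_mul1g.
move=> /tg_nbhs_mul [P [Q [P1 Q1 PQU]]].
have PQ1 : nbhs 1 (P `&` Q) by exact: filterI.
have PQinv1 : nbhs 1 [set v | (P `&` Q) v^-1].
  by apply: tg_inv_cont; rewrite tg_invg1.
exists (P `&` Q `&` [set v | (P `&` Q) v^-1]); split.
- exact: filterI.
- by move=> v [PQv PQv']; split=> //=; rewrite tg_invgK.
- by move=> u v [[Pu _] _] [[_ Qv] _]; exact: PQU.
Qed.

Lemma tg_nbhs1_conj x U : nbhs 1 U -> nbhs 1 [set v | U (x * v * x^-1)].
Proof.
rewrite -{1}(tg_mulgV x) -{1}[x]tg_mulg1 => U1.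
exact: tg_lmul_cont (tg_rmul_cont U1).
Qed.

End TopGroupTheory.

Lemma inv_le_of_ib_le (G : topGroup) (C : Type) : ib_le G C -> inv_le G C.
Proof.
move=> [Cinf ibC]; split=> // U U1.
have [V1 [V1_1 _ V1V1]] := tg_nbhs1_sqrt U1.
have [V [V_1 Vinv VV]] := tg_nbhs1_sqrt V1_1.
have [b bV] := ibC _ V_1.
exists (fun c => [set w | V ((b c)^-1 * w * b c)]); split.
  by move=> c; have := tg_nbhs1_conj (b c)^-1 V_1; rewrite tg_invgK.
move=> x; have [c [u [Vu xE]]] := bV x^-1; exists c => w /= Vw.
have -> : x = u^-1 * (b c)^-1 by rewrite -[x]tg_invgK xE tg_invMg.
have -> : u^-1 * (b c)^-1 * w * (u^-1 * (b c)^-1)^-1 =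
          u^-1 * ((b c)^-1 * w * b c) * u.
  by rewrite tg_invMg !tg_invgK !tg_mulA.
apply: V1V1; first by apply: VV => //; exact: Vinv.
by rewrite -[u]tg_mulg1; apply: VV => //; exact: nbhs_singleton.
Qed.

Lemma ib_le_epi (G H : topGroup) (phi : G -> H) (D : Type) :
  cont_hom phi -> (forall h, exists g, phi g = h) -> ib_le G D -> ib_le H D.
Proof.
move=> [phi_cont phiM] phi_surj [D_inf ibG]; split=> // U U1.
have phi1 : phi 1 = 1.
  have := phiM 1 1; rewrite tg_mul1g => E.
  by rewrite -(tg_mulVg (phi 1)) {3}E tg_mulKg.
have : nbhs 1 (phi @^-1` U) by apply: phi_cont; rewrite phi1.
move=> /ibG [b bP]; exists (phi \o b) => h; have [g <-] := phi_surj h.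
by have [d [u [Uu ->]]] := bP g; exists d, (phi u); split=> //; exact: phiM.
Qed.

Lemma weight_le_char_ib (H : topGroup) (I C : Type) :
  char_le H I -> ib_le H C -> weight_le H (C * I).
Proof.
move=> [[m m_inj] chH] [[n n_inj] ibH].
split; first by exists (fun k => (n k, m k)) => i j [/n_inj].
have [V [V_open V_base]] := chH 1.
have V1 i : nbhs 1 (V i) by apply: open_nbhs_nbhs; exact: V_open.
pose b i := projT1 (cid (ibH _ (V1 i))).
have bP i h : exists c v, V i v /\ h = b i c * v.
  by rewrite /b; case: cid => f /= fP; exact: fP.
exists (fun ci => [set h | V ci.2 ((b ci.2 ci.1)^-1 * h)]); split.
  by move=> [c i]; apply: (continuousP _).1 (V_open i).1; exact: tg_lmul_cont.
move=> U h U_open Uh.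
have : nbhs 1 [set v | U (h * v)].
  by apply: tg_lmul_cont; rewrite tg_mulg1; apply: open_nbhs_nbhs.
move=> /V_base [i0 Vi0U]; have [W [W1 W_inv WW]] := tg_nbhs1_sqrt (V1 i0).
have [i ViW] := V_base _ W1; have [c [v [Viv hE]]] := bP i h.
exists (c, i); split=> [|h' /= Vh']; first by rewrite /= hE tg_mulKg.
have -> : h' = h * (v^-1 * ((b i c)^-1 * h')).
  by rewrite hE tg_mulA tg_mulgK tg_mulKVg.
by apply/Vi0U/WW; [apply/W_inv/ViW | apply/ViW].
Qed.

(** * Cardinal arithmetic *)

Definition pbij {T U} (R : set (T * U)) :=
  forall x y x' y', R (x, y) -> R (x', y') -> (x = x' <-> y = y').

Lemma pbij_inv T U (R : set (T * U)) : pbij R -> pbij R^-1%relation.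
Proof. by move=> Rbij y x y' x' Rxy Rxy'; apply: iff_sym; exact: Rbij. Qed.

Section PartialBijections.
Variables T U : Type.
Implicit Types R : set (T * U).

Lemma pbij_bigcup (F : set (set (T * U))) :
  F `<=` pbij -> total_on F subset -> pbij (\bigcup_(R in F) R).
Proof.
move=> Fbij Ftot x y x' y' [R FR Rxy] [R' FR' Rxy'].
have [RR'|R'R] := Ftot _ _ FR FR'.
- exact: Fbij FR' _ _ _ _ (RR' _ Rxy) Rxy'.
- exact: Fbij FR _ _ _ _ Rxy (R'R _ Rxy').
Qed.

Definition graph_fun (u0 : U) R (x : T) : U :=
  if pselect (exists y, R (x, y)) is left h then projT1 (cid h) else u0.

Lemma graph_funE u0 R x y : pbij R -> R (x, y) -> graph_fun u0 R x = y.
Proof.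
move=> Rbij Rxy; rewrite /graph_fun; case: pselect => [h|[]]; last by exists y.
by case: (cid h) => y' /= Rxy'; apply/(Rbij _ _ _ _ Rxy' Rxy).
Qed.

Lemma pbij_graph_fun u0 (A : set T) (B : set U) R :
  R `<=` A `*` B -> pbij R -> A `<=` fst @` R ->
  set_fun A B (graph_fun u0 R) /\ set_inj A (graph_fun u0 R).
Proof.
move=> RAB Rbij AR; have Rf x : A x -> R (x, graph_fun u0 R x).
  by move=> /AR [[x' y] Rxy /= <-]; rewrite (graph_funE u0 Rbij Rxy).
split=> [x /Rf /RAB [] //|x x' /set_mem /Rf Rx /set_mem /Rf Rx' E].
by apply/(Rbij _ _ _ _ Rx Rx'); rewrite E.
Qed.

End PartialBijections.

Lemma card_comparable T U (t0 : T) (u0 : U) (A : set T) (B : set U) :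
  (exists f, set_fun A B f /\ set_inj A f) \/
  (exists g, set_fun B A g /\ set_inj B g).
Proof.
pose P R := R `<=` A `*` B /\ pbij R.
have [R [[RAB Rbij] Rmax]] : exists R, P R /\ forall R', R `<` R' -> ~ P R'.
  apply: Zorn_bigcup => F FP Ftot; split; first by move=> z [R /FP [RAB _] /RAB].
  by apply: pbij_bigcup Ftot => R /FP [].
have [AR|/existsNP [a /not_implyP [Aa nRa]]] := pselect (A `<=` fst @` R).
  by left; exists (graph_fun u0 R); exact: pbij_graph_fun.
have [BR|/existsNP [b /not_implyP [Bb nRb]]] := pselect (B `<=` snd @` R).
  right; exists (graph_fun t0 R^-1%relation); apply: pbij_graph_fun.
  - by move=> [y x] /RAB [].
  - exact: pbij_inv.
  - by move=> y /BR [[x y'] Rxy /= <-]; exists (y', x).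
exfalso; apply: (Rmax (R `|` [set (a, b)])).
  split=> [|sub]; first exact: subsetUl.
  by apply: nRa; exists (a, b) => //; apply: sub; right.
split; first by move=> _ [/RAB //|->].
move=> x y x' y' [Rxy|[-> ->]] [Rxy'|[-> ->]] //; first exact: Rbij.
- by split=> E; exfalso; [apply: nRa; exists (x, y) | apply: nRb; exists (x, y)].
- by split=> E; exfalso; [apply: nRa; exists (x', y') | apply: nRb; exists (x', y')].
Qed.

Section Hessenberg.
Variables (T : Type) (n : nat -> T).
Hypothesis n_inj : injective n.

Let N := range n.

Let n_inv := 'pinv_(fun=> 0) setT n.

Let n_invK : cancel n n_inv.
Proof. by move=> i; apply: (pinvKV _ (in2W n_inj)); exact: in_setT. Qed.

Let f0 (z : T * T) : T := n (pickle (n_inv z.1, n_inv z.2)).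

Let f0_inj : set_inj (N `*` N) f0.
Proof.
move=> [x y] [x' y'] /set_mem [/= [i _ <-] [j _ <-]] /set_mem [/= [i' _ <-] [j' _ <-]].
by rewrite /f0 /= !n_invK => /n_inj /(pcan_inj pickleK) [-> ->].
Qed.

(* Prescribing [f0] on [N * N] gives Zorn's lemma a starting point and keeps
   the two points [n 0 <> n 1] in every domain. *)
Record sqinj := SqInj {
  sq_dom : set T;
  sq_fun : T * T -> T;
  sq_dom_N : N `<=` sq_dom;
  sq_fun_N : forall z, (N `*` N) z -> sq_fun z = f0 z;
  sq_fun_fun : set_fun (sq_dom `*` sq_dom) sq_dom sq_fun;
  sq_fun_inj : set_inj (sq_dom `*` sq_dom) sq_fun }.

Definition sqinj_le (p q : sqinj) : bool := `[< sq_dom p `<=` sq_dom q /\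
  forall z, (sq_dom p `*` sq_dom p) z -> sq_fun q z = sq_fun p z >].

Let f0_fun : set_fun (N `*` N) N f0.
Proof. by move=> z _; exists (pickle (n_inv z.1, n_inv z.2)). Qed.

Let sqinj_N : sqinj := SqInj (@subset_refl _ N) (fun _ _ => erefl) f0_fun f0_inj.

Let sqinj_N_le p : sqinj_le sqinj_N p.
Proof. by apply/asboolP; split=> [|z Nz]; [exact: sq_dom_N | exact: sq_fun_N]. Qed.

Let sqinj_le_refl p : sqinj_le p p.
Proof. by apply/asboolP; split. Qed.

Let sqinj_le_trans p q r : sqinj_le p q -> sqinj_le q r -> sqinj_le p r.
Proof.
move=> /asboolP [pq fpq] /asboolP [qr fqr]; apply/asboolP; split.
  exact: subset_trans qr.
by move=> z [px py]; rewrite fqr ?fpq //; split; apply: pq.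
Qed.

Section ChainUpperBound.
Variable C0 : set sqinj.
Hypothesis C0_total : total_on C0 sqinj_le.

Let C := sqinj_N |` C0.

Let C_max p q : C p -> C q -> exists2 r, C r & sqinj_le p r /\ sqinj_le q r.
Proof.
move=> [->|C0p] [->|C0q].
- by exists sqinj_N; [left | split; exact: sqinj_le_refl].
- by exists q; [right | split; [exact: sqinj_N_le | exact: sqinj_le_refl]].
- by exists p; [right | split; [exact: sqinj_le_refl | exact: sqinj_N_le]].
have [pq|qp] := C0_total C0p C0q.
- by exists q; [right | split; [exact: pq | exact: sqinj_le_refl]].
- by exists p; [right | split; [exact: sqinj_le_refl | exact: qp]].
Qed.

Let S := \bigcup_(p in C) sq_dom p.
Let f (z : T * T) : T :=
  if pselect (exists p, C p /\ (sq_dom p `*` sq_dom p) z) is left h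
  then sq_fun (projT1 (cid h)) z else f0 z.

Let fE q z : C q -> (sq_dom q `*` sq_dom q) z -> f z = sq_fun q z.
Proof.
move=> Cq qz; rewrite /f; case: pselect => [h|]; last by move=> []; exists q.
case: (cid h) => p /= [Cp pz].
have [r Cr [/asboolP [_ pr] /asboolP [_ qr]]] := C_max Cp Cq.
by rewrite -pr // qr.
Qed.

Let S_square z z' : (S `*` S) z -> (S `*` S) z' ->
  exists2 r, C r & (sq_dom r `*` sq_dom r) z /\ (sq_dom r `*` sq_dom r) z'.
Proof.
move=> [[p1 C1 d1] [p2 C2 d2]] [[p3 C3 d3] [p4 C4 d4]].
have [q12 C12 [/asboolP [s1 _] /asboolP [s2 _]]] := C_max C1 C2.
have [q34 C34 [/asboolP [s3 _] /asboolP [s4 _]]] := C_max C3 C4.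
have [r Cr [/asboolP [t12 _] /asboolP [t34 _]]] := C_max C12 C34.
by exists r => //; split; split; [apply/t12/s1|apply/t12/s2|apply/t34/s3|apply/t34/s4].
Qed.

Let fN z : (N `*` N) z -> f z = f0 z.
Proof. by move=> Nz; rewrite (fE (q := sqinj_N)) //; left. Qed.

Let f_fun : set_fun (S `*` S) S f.
Proof.
move=> z Sz; have [r Cr [rz _]] := S_square Sz Sz.
by rewrite (fE Cr rz); exists r => //; exact: sq_fun_fun.
Qed.

Let f_inj : set_inj (S `*` S) f.
Proof.
move=> z z' /set_mem Sz /set_mem Sz'; have [r Cr [rz rz']] := S_square Sz Sz'.
by rewrite (fE Cr rz) (fE Cr rz'); apply: sq_fun_inj; exact: mem_set.
Qed.

Lemma sqinj_chain_ub : exists t, forall s, C0 s -> sqinj_le s t.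
Proof.
have SN : N `<=` S by move=> x Nx; exists sqinj_N => //; left.
exists (SqInj SN fN f_fun f_inj) => s C0s; apply/asboolP; split=> /=.
  by move=> x sx; exists s => //; right.
by move=> z sz; rewrite (fE (q := s)) //; right.
Qed.

End ChainUpperBound.

Section Maximal.
Variable t : sqinj.
Let S := sq_dom t.
Let f := sq_fun t.

Let Sn (i : nat) : S (n i). Proof. by apply: sq_dom_N; exists i. Qed.

Let tag (u : T -> T) (z : T) : T * T :=
  if pselect (S z) is left _ then (z, n 0) else (u z, n 1%N).

Let tag_fun (u : T -> T) (D : set T) :
  set_fun (D `\` S) S u -> set_fun D (S `*` S) (tag u).
Proof.
move=> uS z Dz; rewrite /tag; case: pselect => Sz; split=> //=; exact: uS.
Qed.

Let tag_inj (u : T -> T) (D : set T) :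
  set_inj (D `\` S) u -> set_inj D (tag u).
Proof.
move=> u_inj x y /set_mem Dx /set_mem Dy; rewrite /tag.
case: pselect => Sx; case: pselect => Sy /pair_equal_spec [E1 E2] //.
- by move/n_inj: E2.
- by move/n_inj: E2.
by apply: u_inj E1; apply: mem_set; split.
Qed.

Section Extension.
Variable g : T -> T.
Hypotheses (g_fun : set_fun S (~` S) g) (g_inj : set_inj S g).

Let S' := S `|` g @` S.

Let g_inv (z : T) : T :=
  if pselect (exists x, S x /\ g x = z) is left h then projT1 (cid h) else z.

Let g_invK z : (g @` S) z -> S (g_inv z) /\ g (g_inv z) = z.
Proof.
move=> [x Sx <-]; rewrite /g_inv; case: pselect => [h|[]]; last by exists x.
by case: (cid h).
Qed.

Let g_inv_fun : set_fun (S' `\` S) S g_inv.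
Proof. by move=> z [[//|/g_invK []]]. Qed.

Let g_inv_inj : set_inj (S' `\` S) g_inv.
Proof.
move=> z z' /set_mem [[//|gz] _] /set_mem [[//|gz'] _] E.
by rewrite -(g_invK gz).2 -(g_invK gz').2 E.
Qed.

Let k (z : T) : T := f (tag g_inv z).

Let k_fun : set_fun S' S k.
Proof. by move=> z /(tag_fun g_inv_fun); exact: sq_fun_fun. Qed.

Let k_inj : set_inj S' k.
Proof.
have tagS z : z \in S' -> tag g_inv z \in sq_dom t `*` sq_dom t.
  by move=> /set_mem /(tag_fun g_inv_fun) /mem_set.
move=> x y xS' yS' kxy.
exact: (tag_inj g_inv_inj) _ _ xS' yS' (sq_fun_inj (tagS _ xS') (tagS _ yS') kxy).
Qed.

Let kS z : (S' `*` S') z -> (S `*` S) (k z.1, k z.2).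
Proof. by move=> [? ?]; split; apply: k_fun. Qed.

(* Pairs outside [S * S] are coded in [S] through [k] and sent outside [S]
   by [g]. *)
Let h (z : T * T) : T :=
  if pselect ((S `*` S) z) is left _ then f z else g (f (k z.1, k z.2)).

Let h_fun : set_fun (S' `*` S') S' h.
Proof.
move=> z S'z; rewrite /h; case: pselect => [Sz|_]; first by left; exact: sq_fun_fun.
by right; exists (f (k z.1, k z.2)) => //; apply: sq_fun_fun; exact: kS.
Qed.

Let h_inj : set_inj (S' `*` S') h.
Proof.
move=> z z' /set_mem S'z /set_mem S'z'; rewrite /h.
have gfkS w : (S' `*` S') w -> ~ S (g (f (k w.1, k w.2))).
  by move=> /kS /sq_fun_fun /g_fun.
case: pselect => [Sz|nSz]; case: pselect => [Sz'|nSz'].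
- by apply: sq_fun_inj; exact: mem_set.
- by move=> E; case: (gfkS _ S'z'); rewrite -E; exact: sq_fun_fun.
- by move=> E; case: (gfkS _ S'z); rewrite E; exact: sq_fun_fun.
have kS_in w : (S' `*` S') w -> (k w.1, k w.2) \in sq_dom t `*` sq_dom t.
  by move=> /kS /mem_set.
have fkS_in w : (S' `*` S') w -> f (k w.1, k w.2) \in sq_dom t.
  by move=> /kS /sq_fun_fun /mem_set.
move=> /(g_inj (fkS_in _ S'z) (fkS_in _ S'z')).
move=> /(sq_fun_inj (kS_in _ S'z) (kS_in _ S'z')) [/= k1 k2].
case: z z' S'z S'z' k1 k2 {nSz nSz'} => [x y] [x' y'] [/= xS' yS'] [/= x'S' y'S'].
move=> /(k_inj (mem_set xS') (mem_set x'S')) ->.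
by move=> /(k_inj (mem_set yS') (mem_set y'S')) ->.
Qed.

Lemma sqinj_extend : exists2 t', sqinj_le t t' & ~ sqinj_le t' t.
Proof.
have N_S' : N `<=` S' by move=> x /(sq_dom_N t) Sx; left.
have h_N z : (N `*` N) z -> h z = f0 z.
  move=> Nz; rewrite /h; case: pselect => [_|[]]; first exact: sq_fun_N.
  by case: Nz; split; exact: sq_dom_N.
exists (SqInj N_S' h_N h_fun h_inj).
  by apply/asboolP; split=> [x Sx|z Sz]; [left | rewrite /= /h; case: pselect].
move=> /asboolP [/= sub _]; apply: (g_fun (Sn 0)); apply: sub; right.
by exists (n 0) => //; exact: Sn.
Qed.

End Extension.

(* [T = S + ~` S] embeds into [S * S], hence into [S]. *)
Lemma sqinj_large (g : T -> T) :
  set_fun (~` S) S g -> set_inj (~` S) g -> exists e : T * T -> T, injective e.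
Proof.
rewrite -setTD => g_fun g_inj; pose k z := f (tag g z).
have tagS z : tag g z \in sq_dom t `*` sq_dom t.
  by apply/mem_set; apply: (tag_fun g_fun).
have kS z w : (k z, k w) \in sq_dom t `*` sq_dom t.
  by apply/mem_set; split; apply: sq_fun_fun; apply/set_mem.
have k_inj : injective k.
  move=> x y kxy; have := sq_fun_inj (tagS x) (tagS y) kxy.
  exact: (tag_inj g_inj) _ _ (in_setT x) (in_setT y).
exists (fun z => f (k z.1, k z.2)) => -[x y] [x' y'] /= /(sq_fun_inj (kS x y) (kS x' y')).
by case=> /k_inj -> /k_inj ->.
Qed.

End Maximal.

Theorem hessenberg : exists e : T * T -> T, injective e.
Proof.
have [t tmax] := ZL_preorder sqinj_N sqinj_le_refl sqinj_le_trans sqinj_chain_ub.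
have [] := card_comparable (n 0) (n 0) (sq_dom t) (~` sq_dom t).
  move=> [g [g_fun g_inj]]; have [t' tt' []] := sqinj_extend g_fun g_inj.
  exact: tmax.
by move=> [g [g_fun g_inj]]; exact: sqinj_large g_fun g_inj.
Qed.

End Hessenberg.

(* Names for the generators of the filter: basic sets, symmetric square roots,
   conjugation-invariant refinements indexed by [D], and meets. *)
Inductive term (A D : Type) :=
| Leaf of A
| Sqrt of term A D
| Conj of term A D & D
| Meet of term A D & term A D.
Arguments Leaf {A D}.

Section TermCode.
Variables (A D I : Type) (pair_code : I * I -> I) (tag : nat -> I).
Variables (emb : A * D -> I) (a0 : A) (d0 : D).

Fixpoint term_code (t : term A D) : I :=
  match t with
  | Leaf a => pair_code (tag 0, emb (a, d0))
  | Sqrt t => pair_code (tag 1%N, term_code t)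
  | Conj t d => pair_code (tag 2, pair_code (term_code t, emb (a0, d)))
  | Meet t t' => pair_code (tag 3, pair_code (term_code t, term_code t'))
  end.

Lemma term_code_inj :
  injective pair_code -> injective tag -> injective emb -> injective term_code.
Proof.
move=> pc_inj tag_inj emb_inj t.
elim: t => [a|t IH|t IH d|t IH t' IH'] [b|s|s d'|s s'] /=;
  move=> /pc_inj /pair_equal_spec [/tag_inj // _].
- by move=> /emb_inj [->].
- by move=> /IH ->.
- by move=> /pc_inj [/IH -> /emb_inj [->]].
- by move=> /pc_inj [/IH -> /IH' ->].
Qed.

End TermCode.

Lemma term_card (A D E : Type) (j : D -> E) (d0 : D) : injective j ->
  infinite_type A -> exists code : term A D -> A * E, injective code.
Proof.
move=> j_inj [f f_inj]; pose tag i := (f i, j d0).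
have tag_inj : injective tag by move=> i i' [/f_inj].
have [pc pc_inj] := hessenberg tag_inj.
exists (term_code pc tag (fun ad => (ad.1, j ad.2)) (f 0) d0).
by apply: term_code_inj => // -[a d] [a' d'] [/= -> /j_inj ->].
Qed.

Lemma prod_code_absorb (T A C : Type) (code : T -> A * C) : infinite_type C ->
  injective code -> exists code' : C * T -> A * C, injective code'.
Proof.
move=> [n n_inj] code_inj; have [pc pc_inj] := hessenberg n_inj.
exists (fun ct => ((code ct.2).1, pc (ct.1, (code ct.2).2))).
move=> [c t] [c' t'] [/= E1 /pc_inj [-> E2]]; congr pair; apply: code_inj.
by rewrite [code t]surjective_pairing [code t']surjective_pairing E1 E2.
Qed.

(** * The image of a group acting on a space *)

Record gaction (G : topGroup) (X : Type) := GAction {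
  act :> G -> X -> X;
  act1 : forall x, act 1 x = x;
  actM : forall g h x, act (g * h) x = act g (act h x) }.

Section GActionTheory.
Variables (G : topGroup) (X : Type) (a : gaction G X).

Lemma actK g : cancel (a g) (a g^-1).
Proof. by move=> x; rewrite -actM tg_mulVg act1. Qed.

Lemma actKV g : cancel (a g^-1) (a g).
Proof. by move=> x; rewrite -actM tg_mulgV act1. Qed.

Lemma act_mul_eq g g' h h' : a g = a g' -> a h = a h' -> a (g * h) = a (g' * h').
Proof. by move=> Eg Eh; apply: funext => x; rewrite !actM Eg Eh. Qed.

Lemma act_inv_eq g h : a g = a h -> a g^-1 = a h^-1.
Proof. by move=> E; apply: funext => x; rewrite -{1}(actKV h x) -E actK. Qed.

End GActionTheory.

(* Bourbaki's axioms for the filter of neighbourhoods of the unit of a group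
   topology. *)
Record gfilter (G : topGroup) := GFilter {
  gfilter_sets :> set G -> Prop;
  gfilter_filter : Filter gfilter_sets;
  gfilter_one : forall U, gfilter_sets U -> U 1;
  gfilter_sqrt : forall U, gfilter_sets U ->
    exists2 V, gfilter_sets V & forall u v, V u -> V v -> U (u * v);
  gfilter_inv : forall U, gfilter_sets U ->
    exists2 V, gfilter_sets V & forall v, V v -> U v^-1;
  gfilter_conj : forall U x, gfilter_sets U ->
    exists2 V, gfilter_sets V & forall v, V v -> U (x * v * x^-1) }.

(* The image of [G] in the transformations of [X]; [F] is a phantom parameter
   selecting the group topology put on it below. *)
Definition qgroup_type (G : topGroup) (X : Type) (a : gaction G X)
  (F : gfilter G) : Type := {f : X -> X | exists g : G, f = a g}.

Section QuotientGroup.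
Variables (G : topGroup) (X : Type) (a : gaction G X) (F : gfilter G).
Local Notation H := (qgroup_type a F).

HB.instance Definition _ := gen_eqMixin H.
HB.instance Definition _ := gen_choiceMixin H.

Definition qproj (g : G) : H := exist _ (a g) (ex_intro _ g erefl).
Definition qrepr (p : H) : G := projT1 (cid (proj2_sig p)).

Lemma qval_inj (p q : H) : sval p = sval q -> p = q.
Proof. by case: p => f pf; case: q => f' pf' /= E; exact: eq_exist. Qed.

Lemma qproj_eq g h : a g = a h -> qproj g = qproj h.
Proof. by move=> E; apply: qval_inj. Qed.

Lemma qrepr_act p : a (qrepr p) = sval p.
Proof. by rewrite /qrepr; case: (cid _) => g /= ->. Qed.

Lemma qreprK : cancel qrepr qproj.
Proof. by move=> p; apply: qval_inj; rewrite /= qrepr_act. Qed.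

Lemma qproj_ind (P : H -> Prop) : (forall g, P (qproj g)) -> forall p, P p.
Proof. by move=> Pg p; rewrite -(qreprK p). Qed.

Definition qmul (p q : H) : H := qproj (qrepr p * qrepr q).
Definition qinv (p : H) : H := qproj (qrepr p)^-1.
Definition qone : H := qproj 1.

Lemma qmulE g h : qmul (qproj g) (qproj h) = qproj (g * h).
Proof. by apply: qproj_eq; apply: act_mul_eq; exact: qrepr_act. Qed.

Lemma qinvE g : qinv (qproj g) = qproj g^-1.
Proof. by apply: qproj_eq; apply: act_inv_eq; exact: qrepr_act. Qed.

Lemma qmulA : associative qmul.
Proof.
by elim/qproj_ind => x; elim/qproj_ind => y; elim/qproj_ind => z; rewrite !qmulE tg_mulA.
Qed.

Lemma qmul1 : left_id qone qmul.
Proof. by elim/qproj_ind => x; rewrite qmulE tg_mul1g. Qed.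

Lemma qmulV : left_inverse qone qinv qmul.
Proof. by elim/qproj_ind => x; rewrite qinvE qmulE tg_mulVg. Qed.

Definition qentourage : set (set (H * H)) :=
  [set E | exists2 U, F U & forall g u, U u -> E (qproj g, qproj (g * u))].

Lemma qentourage_filter : Filter qentourage.
Proof.
have F_filter := gfilter_filter F; constructor.
- by exists setT => //; exact: filterT.
- move=> E1 E2 [U1 FU1 UE1] [U2 FU2 UE2]; exists (U1 `&` U2); first exact: filterI.
  by move=> g u [/UE1 ? /UE2 ?].
- by move=> E1 E2 E12 [U FU UE]; exists U => // g u /UE /E12.
Qed.

Lemma qentourage_diag E : qentourage E -> diagonal `<=` E.
Proof.
move=> [U FU UE] [p q] pq; have {pq} -> : q = p by exact: esym pq.
elim/qproj_ind: p => g.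
by have := UE g 1 (gfilter_one FU); rewrite tg_mulg1.
Qed.

Local Open Scope relation_scope.

Lemma qentourage_inv E : qentourage E -> qentourage E^-1.
Proof.
move=> [U FU UE]; have [V FV VU] := gfilter_inv FU.
by exists V => // g v /VU /(UE (g * v)); rewrite tg_mulgK.
Qed.

Lemma qentourage_split E : qentourage E -> exists2 E', qentourage E' & E' \; E' `<=` E.
Proof.
move=> [U FU UE]; have [V FV VVU] := gfilter_sqrt FU.
exists [set pq | exists g v, V v /\ pq = (qproj g, qproj (g * v))].
  by exists V => // g v Vv; exists g, v.
move=> [p r] /= [q [g1 [v1 [Vv1 [-> ->]]]] [g2 [v2 [Vv2 [E1 ->]]]]].
have := UE g1 _ (VVU _ _ Vv1 Vv2).
by rewrite -[qproj (g2 * v2)]qmulE -(qproj_eq E1) qmulE tg_mulA.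
Qed.

Local Close Scope relation_scope.

HB.instance Definition _ := isUniform.Build H
  qentourage_filter qentourage_diag qentourage_inv qentourage_split.

Lemma nbhs_qprojP g (S : set H) :
  nbhs (qproj g) S <-> exists2 U, F U & forall u, U u -> S (qproj (g * u)).
Proof.
rewrite -nbhs_entourageE; split.
  by move=> [E [U FU UE] ES]; exists U => // u Uu; apply: ES; apply/xsectionP; exact: UE.
move=> [U FU US]; exists [set pq | exists g' u, U u /\ pq = (qproj g', qproj (g' * u))].
  by exists U => // g' u Uu; exists g', u.
move=> q /xsectionP [g' [u [Uu [E ->]]]].
by rewrite -qmulE -(qproj_eq E) qmulE; exact: US.
Qed.

Lemma qmul_cont : continuous (fun pq : H * H => qmul pq.1 pq.2).
Proof.
move=> [p q]; elim/qproj_ind: p => g; elim/qproj_ind: q => h S /=.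
rewrite qmulE => /nbhs_qprojP [U FU US].
have [V FV VVU] := gfilter_sqrt FU; have [W FW WV] := gfilter_conj h^-1 FV.
exists ([set p | exists2 w, W w & p = qproj (g * w)],
        [set q | exists2 v, V v & q = qproj (h * v)]).
  by split; apply/nbhs_qprojP; [exists W | exists V] => // u Uu; exists u.
move=> [_ _] /= [[w Ww ->] [v Vv ->]]; rewrite qmulE.
have := US _ (VVU _ _ (WV _ Ww) Vv); rewrite tg_invgK.
by rewrite !tg_mulA tg_mulgK.
Qed.

Lemma qinv_cont : continuous qinv.
Proof.
elim/qproj_ind => g S; rewrite qinvE => /nbhs_qprojP [U FU US].
have [V FV VU] := gfilter_conj g FU; have [W FW WV] := gfilter_inv FV.
apply/nbhs_qprojP; exists W => // w Ww /=; rewrite qinvE.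
by have := US _ (VU _ (WV _ Ww)); rewrite tg_invMg tg_mulA tg_mulKg.
Qed.

Definition qgroup : topGroup :=
  @TopGroup H qmul qone qinv qmulA qmul1 qmulV qmul_cont qinv_cont.

End QuotientGroup.

Definition gfilter_equicont (G : topGroup) (X : topologicalType)
    (a : gaction G X) (F : gfilter G) :=
  forall (y : X) (O : set X), nbhs y O ->
    exists2 U, F U & exists2 P, nbhs y P & forall u z, U u -> P z -> O (a u z).

Section QuotientAction.
Variables (G : topGroup) (X : topologicalType) (a : gaction G X) (F : gfilter G).
Local Notation H := (qgroup a F).
Hypotheses (a_cont : continuous (fun q : G * X => a q.1 q.2)).
Hypotheses (F_nbhs : forall U, F U -> nbhs 1 U) (F_act : gfilter_equicont a F).

Lemma act_cont g : continuous (a g).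
Proof.
move=> y O /(@a_cont (g, y)) [[P Q] /= [Pg Qy] PQO].
by apply: filterS Qy => z Qz; apply: (PQO (g, z)); split=> //; exact: nbhs_singleton.
Qed.

Definition qact (p : H) (x : X) : X := sval p x.

Lemma qact_cont : continuous (fun q : H * X => qact q.1 q.2).
Proof.
move=> [p y]; elim/qproj_ind: p => g O /act_cont /F_act [U FU [P Py UPO]].
exists ([set p | exists2 u, U u & p = qproj a F (g * u)], P).
  by split=> //=; apply/nbhs_qprojP; exists U => // u Uu; exists u.
by move=> [_ z] /= [[u Uu ->] Pz]; rewrite /qact /= actM; exact: UPO.
Qed.

Lemma qproj_mul g h : qproj a F (g * h) = (qproj a F g : H) * qproj a F h.
Proof. by rewrite -qmulE. Qed.

Lemma qact1 x : qact 1 x = x.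
Proof. exact: act1. Qed.

Lemma qactM p q x : qact (p * q) x = qact p (qact q x).
Proof.
elim/qproj_ind: p => g; elim/qproj_ind: q => h.
by rewrite -qproj_mul /qact /= actM.
Qed.

Lemma qproj_cont : continuous (qproj a F).
Proof.
move=> g S /nbhs_qprojP [U FU US].
have : nbhs (g * 1) [set h | U (g^-1 * h)].
  by apply: tg_lmul_cont; rewrite tg_mulKg; exact: F_nbhs.
rewrite tg_mulg1 => gU; apply: filterS gU => h Uh /=.
by have := US _ Uh; rewrite tg_mulKVg.
Qed.

Lemma qproj_cont_hom : cont_hom (H := H) (qproj a F).
Proof. by split; [exact: qproj_cont | exact: qproj_mul]. Qed.

Lemma qproj_surj (h : H) : exists g, qproj a F g = h.
Proof. by exists (qrepr h); exact: qreprK. Qed.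

Lemma qgroup_accessible : accessible_space X -> accessible_space H.
Proof.
move=> X_T1 p q /eqP pq.
have [y pqy] : exists y, sval p y <> sval q y.
  apply/existsNP => pq_eq; apply: pq; apply: qval_inj; apply: funext => y.
  exact: contrapT (pq_eq y).
exists [set s : H | sval s y <> sval q y]; split; last 2 first.
- by rewrite inE.
- by rewrite inE /=; apply.
have qy_closed : closed [set sval q y] := @accessible_closed_set1 X X_T1 (sval q y).
rewrite openE => s sy; have : nbhs (qact s y) (~` [set sval q y]).
  by apply: open_nbhs_nbhs; split=> //; exact: closed_openC.
move=> /(@qact_cont (s, y)) [[P Q] /= [Ps Qy] PQ].
by apply: filterS Ps => s' Ps'; apply: (PQ (s', y)); split=> //; exact: nbhs_singleton.
Qed.

Lemma qgroup_tychonoff : Defs.tychonoff X -> Defs.tychonoff H.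
Proof.
move=> [X_T1 _]; split; first exact: qgroup_accessible.
move=> p B B_closed nBp.
have := @uniform_completely_regular Rdefinitions.R (qgroup_type a F) p B B_closed nBp.
move=> /(@uniform_separatorP _ Rdefinitions.R) [f [f_cont _ f0 f1]].
exists f; split=> //; split; first by apply: f0; exists p.
by move=> q Bq; apply: f1; exists q.
Qed.

Lemma qgroup_Gspace : Defs.tychonoff X -> is_Gspace qact.
Proof.
move=> X_tych; split=> //; first exact: qgroup_tychonoff.
- exact: qact_cont.
- exact: qact1.
- exact: qactM.
Qed.

End QuotientAction.

(** * The filter generated by terms *)

Section TermFilter.
Variables (G : topGroup) (A D : Type) (a0 : A) (leaf : A -> set G).
Hypotheses (leaf_nbhs : forall i, nbhs 1 (leaf i)) (G_inv : inv_le G D).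

Let sqrt_set (U : set G) : set G :=
  if pselect (nbhs 1 U) is left U1 then projT1 (cid (tg_nbhs1_sqrt U1)) else setT.

Let sqrt_setP U : nbhs 1 U -> [/\ nbhs 1 (sqrt_set U),
  forall v, sqrt_set U v -> sqrt_set U v^-1 &
  forall u v, sqrt_set U u -> sqrt_set U v -> U (u * v)].
Proof. by move=> U1; rewrite /sqrt_set; case: pselect => // U1'; case: cid. Qed.

Let conj_set (U : set G) (d : D) : set G :=
  if pselect (nbhs 1 U) is left U1 then projT1 (cid (G_inv.2 U U1)) d else setT.

Let conj_setP U : nbhs 1 U -> (forall d, nbhs 1 (conj_set U d)) /\
  (forall x, exists d, forall v, conj_set U d v -> U (x * v * x^-1)).
Proof. by move=> U1; rewrite /conj_set; case: pselect => // U1'; case: cid. Qed.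

Fixpoint term_set (t : term A D) : set G :=
  match t with
  | Leaf i => leaf i
  | Sqrt t => sqrt_set (term_set t)
  | Conj t d => conj_set (term_set t) d
  | Meet t t' => term_set t `&` term_set t'
  end.

Lemma term_set_nbhs t : nbhs 1 (term_set t).
Proof.
elim: t => [i|t IH|t IH d|t IH t' IH'] /=; first exact: leaf_nbhs.
- by case: (sqrt_setP IH).
- by case: (conj_setP IH).
- exact: filterI.
Qed.

Definition term_filter_sets : set (set G) := [set U | exists t, term_set t `<=` U].

Let term_filter : Filter term_filter_sets.
Proof.
constructor; first by exists (Leaf a0).
- by move=> U V [t tU] [t' t'V]; exists (Meet t t') => x [/tU ? /t'V ?].
- by move=> U V UV [t tU]; exists t; exact: subset_trans UV.
Qed.

Let term_filter_one U : term_filter_sets U -> U 1.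
Proof. by move=> [t tU]; apply: tU; apply: nbhs_singleton; exact: term_set_nbhs. Qed.

Let term_filter_sqrt U : term_filter_sets U ->
  exists2 V, term_filter_sets V & forall u v, V u -> V v -> U (u * v).
Proof.
move=> [t tU]; exists (term_set (Sqrt t)); first by exists (Sqrt t).
by move=> u v tu tv; apply: tU; case: (sqrt_setP (term_set_nbhs t)) => _ _; apply.
Qed.

Let term_filter_inv U : term_filter_sets U ->
  exists2 V, term_filter_sets V & forall v, V v -> U v^-1.
Proof.
move=> [t tU]; exists (term_set (Sqrt t)); first by exists (Sqrt t).
have [t1 t_inv tt] := sqrt_setP (term_set_nbhs t).
move=> v /t_inv tv; apply: tU; rewrite -[_^-1]tg_mulg1; apply: tt => //.
exact: nbhs_singleton.
Qed.

Let term_filter_conj U x : term_filter_sets U ->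
  exists2 V, term_filter_sets V & forall v, V v -> U (x * v * x^-1).
Proof.
move=> [t tU]; have [_ /(_ x) [d td]] := conj_setP (term_set_nbhs t).
by exists (term_set (Conj t d)); [exists (Conj t d) | move=> v /td /tU].
Qed.

Definition term_gfilter : gfilter G := GFilter term_filter term_filter_one
  term_filter_sqrt term_filter_inv term_filter_conj.

Lemma term_gfilter_nbhs U : term_gfilter U -> nbhs 1 U.
Proof. by move=> [t tU]; exact: filterS tU (term_set_nbhs t). Qed.

Lemma term_gfilter_leaf i : term_gfilter (leaf i).
Proof. by exists (Leaf i). Qed.

Lemma qgroup_char_le (X : Type) (a : gaction G X) :
  infinite_type A -> char_le (qgroup a term_gfilter) (term A D).
Proof.
move=> [f f_inj]; split; first by exists (Leaf \o f) => i j [/f_inj].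
elim/qproj_ind => g.
pose N t : set (qgroup a term_gfilter) :=
  [set q | exists2 u, term_set t u & q = qproj a _ (g * u)].
have N_nbhs t : nbhs (qproj a _ g) (N t).
  by apply/nbhs_qprojP; exists (term_set t); [exists t | move=> u tu; exists u].
exists (fun t => (N t)°); split=> [t|U /nbhs_qprojP [U0 [t tU0] U0U]].
  by split; [exact: open_interior | exact: N_nbhs].
by exists t => q /interior_subset [u tu ->]; exact/U0U/tU0.
Qed.

End TermFilter.

(** * Transitive G-spaces *)

Lemma inv_ib_common_index (G : topGroup) (B C : Type) :
  inv_le G B -> ib_le G C -> exists D (jB : D -> B) (jC : D -> C),
    [/\ injective jB, injective jC & inv_le G D].
Proof.
move=> invB ibC; have [[fB _] _] := invB; have [[fC _] _] := ibC.
have [[f [_ f_inj]]|[g [_ g_inj]]] := card_comparable (fB 0) (fC 0) setT setT.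
  by exists B, id, f; split=> // x y; apply: f_inj; exact: mem_set.
exists C, g, id; split=> //; last exact: inv_le_of_ib_le.
by move=> x y; apply: g_inj; exact: mem_set.
Qed.

Definition leaf_control (G : topGroup) (X : topologicalType) (a : gaction G X)
    (A : Type) (leaf : A -> set G) :=
  forall (y : X) (O : set X), nbhs y O -> exists i k, exists2 P, nbhs y P &
    forall u z, leaf i (k^-1 * u * k) -> P z -> O (a u z).

Section Leaves.
Variables (G : topGroup) (X : topologicalType) (a : gaction G X) (A : Type).
Hypotheses (a_cont : continuous (fun q : G * X => a q.1 q.2)).
Hypotheses (a_trans : transitive_action a) (X_char : char_le X A).

Lemma act_leaves : exists2 leaf : A -> set G,
  forall i, nbhs 1 (leaf i) & leaf_control a leaf.
Proof.
have [x0|X0] := pselect (exists x : X, True); last first.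
  by exists (fun=> setT) => [i|y]; [exact: filterT | case: X0; exists y].
case: x0 => x0 _; have [_ /(_ x0) [B [B_open B_base]]] := X_char.
have PQ_ex i : exists PQ : set G * set X, [/\ nbhs 1 PQ.1, nbhs x0 PQ.2 &
    forall u z, PQ.1 u -> PQ.2 z -> B i (a u z)].
  have : nbhs (a 1 x0) (B i) by rewrite act1; exact: open_nbhs_nbhs.
  move=> /(@a_cont (1, x0)) [[P Q] /= [P1 Qx0] PQB].
  by exists (P, Q); split=> // u z Pu Qz; exact: (PQB (u, z)).
have [PQ PQP] := choice PQ_ex.
exists (fun i => (PQ i).1) => [i|y O Oy]; first by case: (PQP i).
have [k kx0] := a_trans x0 y.
have : nbhs (a k x0) O by rewrite kx0.
move=> /(act_cont a_cont) /B_base [i BiO]; exists i, k.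
have [_ Qx0 PQB] := PQP i; exists [set z | (PQ i).2 (a k^-1 z)].
  by apply: (act_cont a_cont); rewrite -kx0 actK.
move=> u z Pu Qz; have := BiO _ (PQB _ _ Pu Qz).
by rewrite /= -!actM tg_mulA tg_mulKVg tg_mulgK.
Qed.

Lemma gfilter_equicont_leaves (F : gfilter G) (leaf : A -> set G) :
  (forall i, F (leaf i)) -> leaf_control a leaf -> gfilter_equicont a F.
Proof.
move=> F_leaf leafP y O /leafP [i [k [P Py PO]]].
have [V FV VU] := gfilter_conj k^-1 (F_leaf i).
exists V => //; exists P => // u z /VU; rewrite tg_invgK; exact: PO.
Qed.

Lemma act_term_gfilter (D : Type) : inv_le G D -> exists F : gfilter G,
  [/\ forall U, F U -> nbhs 1 U, gfilter_equicont a F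
    & char_le (qgroup a F) (term A D)].
Proof.
move=> invD; have [leaf leaf_nbhs leafP] := act_leaves.
have [A_inf _] := X_char; have [fA _] := A_inf.
exists (term_gfilter (fA 0) leaf_nbhs invD); split.
- exact: term_gfilter_nbhs.
- by apply: gfilter_equicont_leaves leafP; exact: term_gfilter_leaf.
- exact: qgroup_char_le.
Qed.

End Leaves.

Unset Implicit Arguments.
Theorem theorem3p9 (G : topGroup) (X : topologicalType) (alpha : G -> X -> X)
  (A B C : Type) :
  is_Gspace alpha -> transitive_action alpha ->
  char_le X A -> inv_le G B -> ib_le G C ->
  exists (H : topGroup) (gamma : H -> X -> X) (phi : G -> H),
    is_Gspace gamma /\ transitive_action gamma /\
    char_le H (A * B)%type /\
    (forall D : Type, ib_le G D -> ib_le H D) /\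
    weight_le H (A * C)%type /\
    cont_hom phi /\ (forall h : H, exists g : G, phi g = h) /\
    (forall g x, alpha g x = gamma (phi g) x).
Proof.
move=> [_ X_tych a_cont a1 aM] a_trans X_char invB ibC.
pose a := GAction a1 aM.
have {}a_cont : continuous (fun q : G * X => a q.1 q.2) := a_cont.
have [D [jB [jC [jB_inj jC_inj invD]]]] := inv_ib_common_index invB ibC.
have [F [F_nbhs F_act H_char]] := act_term_gfilter a_cont a_trans X_char invD.
have [[fD _] _] := invD; have [A_inf _] := X_char.
have [codeB codeB_inj] := term_card (fD 0) jB_inj A_inf.
have [codeC codeC_inj] := term_card (fD 0) jC_inj A_inf.
have [code code_inj] := prod_code_absorb ibC.1 codeC_inj.
have phi_hom := qproj_cont_hom a F_nbhs.
have H_ib D' : ib_le G D' -> ib_le (qgroup a F) D'.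
  exact: ib_le_epi phi_hom (@qproj_surj _ _ a F).
exists (qgroup a F), (qact (F := F)), (qproj a F).
split; first exact: qgroup_Gspace.
split; first by move=> x y; have [g <-] := a_trans x y; exists (qproj a F g).
split; first exact: char_le_inj codeB_inj H_char.
split; first exact: H_ib.
split; first exact: weight_le_inj code_inj (weight_le_char_ib H_char (H_ib _ ibC)).
by split; [exact: phi_hom | split; [exact: qproj_surj | by []]].
Qed.
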